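(* Let $n\ge 2$ be even, $K_n=(V,E)$ the complete graph, and $M_1,M_2$ perfect matchings in $K_n$. If the graph $(V,M_1\triangle M_2)$ has a single non-trivial connected component, then $\bm{c}=\chi(M_1)-\chi(M_2)$ is a circuit of the Perfect Matching polytope $P_{\mathrm{perfmatch}}(n)=\operatorname{conv}\{\chi(M): M\text{ a perfect matching in }K_n\}$, with circuits taken with respect to the linear description $$\bm{x}(\delta(S))\ge 1\ \text{for all } S\subset V,\ |S|\text{ odd},\ |S|\ge 3;\quad \bm{x}(\delta(v))=1\ \text{for all } v\in V;\quad \bm{x}\ge\bm{0}.$$
   Context: $\chi(M)\in\{0,1\}^E$ is the characteristic vector of $M$; $\triangle$ is symmetric difference; a non-trivial component has more than one node; $\delta(S)$ is the set of edges with exactly one endpoint in $S$, $\delta(v)=\delta(\{v\})$, $\bm{x}(F)=\sum_{e\in F}x_e$. Circuits: for a polytope $P=\{\bm{x}: A\bm{x}=\bm{b},\ B\bm{x}\le \bm{d}\}$ given by a fixed linear system, a nonzero vector $\bm{g}$ is a circuit of $P$ if $A\bm{g}=\bm{0}$ and $\operatorname{supp}(B\bm{g})$ is inclusion-minimal among the sets $\operatorname{supp}(B\bm{y})$ with $A\bm{y}=\bm{0}$, $\bm{y}\neq\bm{0}$. *)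

From mathcomp Require Import all_boot all_order all_algebra.
Set Implicit Arguments. Unset Strict Implicit. Unset Printing Implicit Defensive.
Import Order.TTheory GRing.Theory Num.Theory.
Local Open Scope ring_scope.

(* Edges of the complete graph K_n on V = 'I_n: 2-element subsets of V. *)
Definition edge (n : nat) := {e : {set 'I_n} | #|e| == 2%N}.

Definition cut (n : nat) (S : {set 'I_n}) : {set edge n} :=
  [set e : edge n | #|val e :&: S| == 1%N].

Definition star (n : nat) (v : 'I_n) : {set edge n} := cut [set v].

Definition perfect_matching (n : nat) (M : {set edge n}) : bool :=
  [forall v : 'I_n, #|[set e in M | v \in val e]| == 1%N].

Definition chi (R : nzRingType) (n : nat) (M : {set edge n}) : edge n -> R :=
  fun e => (e \in M)%:R.

Definition xsum (R : nzRingType) (n : nat) (x : edge n -> R) (F : {set edge n}) : R :=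
  \sum_(e in F) x e.

Definition oddset (n : nat) := {S : {set 'I_n} | odd #|S| && (3 <= #|S|)%N}.

(* rows of the inequality system B x <= d :
   inl T : -x(delta(T)) <= -1   ;   inr e : -x_e <= 0 *)
Definition ineq_row (n : nat) := (oddset n + edge n)%type.

Definition Aop (R : nzRingType) (n : nat) (x : edge n -> R) (v : 'I_n) : R :=
  xsum x (star v).

Definition Bop (R : nzRingType) (n : nat) (x : edge n -> R) (i : ineq_row n) : R :=
  match i with
  | inl T => - xsum x (cut (val T))
  | inr e => - x e
  end.

Definition in_kerA (R : nzRingType) (n : nat) (x : edge n -> R) : Prop :=
  forall v, Aop x v = 0.

Definition nonzero (R : nzRingType) (n : nat) (x : edge n -> R) : Prop :=
  exists e, x e != 0.

Definition suppB (R : nzRingType) (n : nat) (x : edge n -> R) : {set ineq_row n} :=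
  [set i | Bop x i != 0].

Definition is_circuit (R : nzRingType) (n : nat) (g : edge n -> R) : Prop :=
  nonzero g /\ in_kerA g /\
  forall y : edge n -> R, in_kerA y -> nonzero y ->
    suppB y \subset suppB g -> suppB y = suppB g.

Definition symdiff (T : finType) (A B : {set T}) : {set T} := (A :\: B) :|: (B :\: A).

Definition adj (n : nat) (F : {set edge n}) : rel 'I_n :=
  fun u v => [exists e in F, (u \in val e) && (v \in val e) && (u != v)].

Definition component (n : nat) (F : {set edge n}) (u : 'I_n) : {set 'I_n} :=
  [set w | connect (adj F) u w].

Definition single_nontrivial_component (n : nat) (F : {set edge n}) : Prop :=
  exists C : {set 'I_n},
    [/\ C \in [set component F u | u : 'I_n], (1 < #|C|)%N &
        forall D, D \in [set component F u | u : 'I_n] -> (1 < #|D|)%N -> D = C].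

From mathcomp Require Import all_boot all_order all_algebra.
Set Implicit Arguments.
Unset Strict Implicit.
Unset Printing Implicit Defensive.
Import Order.TTheory GRing.Theory Num.Theory.
Local Open Scope ring_scope.

(* Let F = M1 △ M2 and c = χ(M1) - χ(M2).  If y ≠ 0 lies in the kernel of the
   degree equations and supp(By) ⊆ supp(Bc), the rows -x_e ≤ 0 alone force y
   to vanish off F.  At a vertex met by F, the F-edges are exactly its M1-edge
   (where c = 1) and its M2-edge (where c = -1), so the degree equation says
   that y_e c_e takes the same value on both.  Propagating along the unique
   nontrivial component of (V, F), which contains every edge of F, gives
   y = λ c with λ ≠ 0, hence supp(By) = supp(Bc). *)

Section CompleteGraph.
Variable n : nat.
Implicit Types (F M : {set edge n}) (e : edge n) (u v : 'I_n).

Lemma in_star v e : (e \in star v) = (v \in val e).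
Proof.
rewrite inE; have [ve|nve] := boolP (v \in val e).
  by rewrite (setIidPr _) ?cards1 // sub1set.
suff -> : val e :&: [set v] = set0 by rewrite cards0.
by apply/setP=> w; rewrite !inE andbC; case: eqP => // ->; exact: negbTE.
Qed.

Lemma edge_vertex e : exists v, v \in val e.
Proof. by apply/card_gt0P; rewrite (eqP (valP e)). Qed.

Lemma edge_other_end e v : v \in val e -> exists2 w, w \in val e & w != v.
Proof.
move=> ve; have /cards1P[w ev] : #|val e :\ v| == 1%N.
  by move: (valP e); rewrite (cardsD1 v) ve add1n.
have /setD1P[wv we] : w \in val e :\ v by rewrite ev set11.
by exists w.
Qed.

Lemma adj_edge F e a b : e \in F -> a \in val e -> b \in val e -> a != b -> adj F a b.
Proof. by move=> eF ae be ab; apply/existsP; exists e; rewrite eF ae be ab. Qed.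

Lemma component_edge_gt1 F e v : e \in F -> v \in val e -> (1 < #|component F v|)%N.
Proof.
move=> eF ve; have [w we wv] := edge_other_end ve.
apply/card_gt1P; exists v, w; rewrite !inE connect0 eq_sym wv; split=> //.
by apply: connect1; apply: adj_edge eF ve we _; rewrite eq_sym.
Qed.

Lemma component_gt1_edge F u : (1 < #|component F u|)%N -> exists e, e \in F.
Proof.
have [F0|[e eF] _] := set_0Vmem F; last by exists e.
suff /subset_leq_card : component F u \subset [set u] by rewrite cards1 => /leq_gtF ->.
apply/subsetP=> w; rewrite !inE => /connectP[[|x p] /= +->] //.
by rewrite /adj F0 => /andP[/existsP[e]]; rewrite inE.
Qed.

Lemma connect_adj_edge_const (T : Type) F (f : edge n -> T) :
    (forall v e e', e \in F -> e' \in F -> v \in val e -> v \in val e' -> f e = f e') ->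
  forall u w, connect (adj F) u w ->
  forall e e', e \in F -> e' \in F -> u \in val e -> w \in val e' -> f e = f e'.
Proof.
move=> f_loc u w /connectP[p + ->]; elim: p u => [|x p IHp] u /=.
  by move=> e e'; apply: f_loc.
case/andP=> /existsP[e1 /andP[e1F /andP[/andP[ue1 xe1] _]]] /IHp f_x e e' eF e'F ue.
by rewrite (f_loc u e e1) //; apply: f_x.
Qed.

Section SingleComponent.
Variables (F : {set edge n}) (hF : single_nontrivial_component F).

Lemma single_component_edge : exists e, e \in F.
Proof. by case: hF => C [/imsetP[u _ ->] /component_gt1_edge]. Qed.

Lemma single_component_connect e e' a b :
  e \in F -> e' \in F -> a \in val e -> b \in val e' -> connect (adj F) a b.
Proof.
case: hF => C [_ _ uniqC] eF e'F ae be'.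
have compC v e0 : e0 \in F -> v \in val e0 -> component F v = C.
  by move=> e0F ve0; apply: uniqC; [exact: imset_f | exact: component_edge_gt1 e0F ve0].
have : b \in component F a by rewrite (compC a e) // -(compC b e') // inE connect0.
by rewrite inE.
Qed.

End SingleComponent.

Lemma perfect_matching_star M :
  perfect_matching M -> forall v, exists m, M :&: star v = [set m].
Proof.
move/forallP=> hM v; apply/cards1P.
suff -> : M :&: star v = [set e in M | v \in val e] by exact: hM.
by apply/setP=> e; rewrite in_setI in_star inE.
Qed.

Lemma matching_at_star M m v e :
  M :&: star v = [set m] -> (e \in M) && (v \in val e) = (e == m).
Proof. by move/setP/(_ e); rewrite in_setI in_star in_set1. Qed.

Lemma chi_star_sum (R : nzRingType) M v :
  perfect_matching M -> xsum (chi R M) (star v) = 1.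
Proof.
move=> hM; have [m Mm] := perfect_matching_star hM v.
have /setIP[mM _] : m \in M :&: star v by rewrite Mm set11.
rewrite /xsum (big_setID M) /= setIC Mm big_set1 big1 ?addr0 => [|e /setDP[_ eM]].
  by rewrite /chi mM.
by rewrite /chi (negbTE eM).
Qed.

Lemma suppB_sub_vanish (R : nzRingType) (x y : edge n -> R) e :
  suppB y \subset suppB x -> x e = 0 -> y e = 0.
Proof.
move=> /subsetP yx xe; apply/eqP; have := yx (inr e).
by rewrite !inE /= xe oppr0 eqxx oppr_eq0 => /implyP; rewrite implybF negbK.
Qed.

Lemma suppB_scale (R : idomainType) (x y : edge n -> R) c :
  c != 0 -> (forall e, y e = c * x e) -> suppB y = suppB x.
Proof.
move=> c0 yx; apply/setP=> -[T|e]; rewrite !inE /= !oppr_eq0 ?yx.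
  by rewrite /xsum (eq_bigr _ (fun e _ => yx e)) -mulr_sumr mulf_eq0 negb_or c0.
by rewrite mulf_eq0 negb_or c0.
Qed.

Section MatchingDifference.
Variables (R : nzRingType) (M1 M2 : {set edge n}).
Local Notation F := (symdiff M1 M2).

Definition chi_diff : edge n -> R := fun e => chi R M1 e - chi R M2 e.

Lemma in_symdiff e : (e \in F) = (e \in M1 :\: M2) || (e \in M2 :\: M1).
Proof. by rewrite in_setU. Qed.

Lemma chi_diff_out e : e \notin F -> chi_diff e = 0.
Proof.
by rewrite in_symdiff !in_setD /chi_diff /chi; case: (e \in M1); case: (e \in M2); rewrite ?subrr.
Qed.

Lemma chi_diff1 e : e \in M1 :\: M2 -> chi_diff e = 1.
Proof. by case/setDP=> e1 e2; rewrite /chi_diff /chi e1 (negbTE e2) subr0. Qed.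

Lemma chi_diffN1 e : e \in M2 :\: M1 -> chi_diff e = -1.
Proof. by case/setDP=> e2 e1; rewrite /chi_diff /chi e2 (negbTE e1) sub0r. Qed.

Lemma chi_diff_sqr e : e \in F -> chi_diff e * chi_diff e = 1.
Proof.
by rewrite in_symdiff => /orP[/chi_diff1|/chi_diffN1] ->; rewrite ?mulrNN mulr1.
Qed.

Lemma chi_diff_neq0 e : e \in F -> chi_diff e != 0.
Proof.
by move/chi_diff_sqr; have [->|] := eqP; rewrite ?mul0r // => /esym/eqP; rewrite oner_eq0.
Qed.

Hypotheses (h1 : perfect_matching M1) (h2 : perfect_matching M2).

Lemma chi_diff_kerA : in_kerA chi_diff.
Proof. by move=> v; rewrite /Aop /xsum sumrB -!/(xsum _ _) !chi_star_sum ?subrr. Qed.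

Lemma star_symdiff v e : e \in F -> v \in val e ->
  exists m1 m2, [/\ m1 \in M1 :\: M2, m2 \in M2 :\: M1 & star v :&: F = [set m1; m2]].
Proof.
move=> eF ve.
have [m1 /matching_at_star M1v] := perfect_matching_star h1 v.
have [m2 /matching_at_star M2v] := perfect_matching_star h2 v.
have /andP[m1M1 vm1] : (m1 \in M1) && (v \in val m1) by rewrite M1v.
have /andP[m2M2 vm2] : (m2 \in M2) && (v \in val m2) by rewrite M2v.
have m12 : m1 != m2.
  apply: contraTneq eF => m12; rewrite in_symdiff !in_setD.
  by move: (M1v e) (M2v e); rewrite ve !andbT -m12 => -> ->; case: (e == m1).
have not_both e0 : v \in val e0 -> ~~ ((e0 \in M1) && (e0 \in M2)).
  move=> ve0; apply: contra m12 => /andP[e0M1 e0M2].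
  have /eqP <- : e0 == m1 by rewrite -M1v e0M1.
  by rewrite -M2v e0M2.
exists m1, m2; split.
- by move: (not_both m1 vm1); rewrite in_setD m1M1 andbT.
- by move: (not_both m2 vm2); rewrite in_setD m2M2 !andbT.
apply/setP=> e0; rewrite in_setI in_star in_symdiff !in_setD in_set2 -M1v -M2v.
have [ve0|_] := boolP (v \in val e0); last by rewrite !andbF.
by move: (not_both e0 ve0); rewrite !andbT; case: (e0 \in M1); case: (e0 \in M2).
Qed.

Variables (y : edge n -> R) (y_ker : in_kerA y) (y_out : forall e, e \notin F -> y e = 0).

Lemma kerA_symdiff_local v e e' : e \in F -> e' \in F -> v \in val e -> v \in val e' ->
  y e * chi_diff e = y e' * chi_diff e'.
Proof.
move=> eF e'F ve ve'.
have [m1 [m2 [m1M m2M starF]]] := star_symdiff eF ve.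
have m12 : m1 \notin [set m2].
  by rewrite in_set1; apply: contraTneq m1M => ->; rewrite in_setD (setDP m2M).1.
have y_m : y m1 + y m2 = 0.
  have := y_ker v; rewrite /Aop /xsum (big_setID F) /= [X in _ + X]big1 ?addr0.
    by rewrite starF big_setU1 //= big_set1.
  by move=> e0 /setDP[_]; apply: y_out.
have signed e0 : e0 \in star v :&: F -> y e0 * chi_diff e0 = y m1.
  rewrite starF in_set2 => /orP[]/eqP->; first by rewrite chi_diff1 ?mulr1.
  by rewrite chi_diffN1 // mulrN1; apply/esym/eqP; rewrite -addr_eq0 y_m.
by rewrite !signed // in_setI in_star ?eF ?e'F ?ve ?ve'.
Qed.

Lemma kerA_symdiff_proportional e1 : single_nontrivial_component F -> e1 \in F ->
  forall e, y e = (y e1 * chi_diff e1) * chi_diff e.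
Proof.
move=> hF e1F e; have [eF|eF] := boolP (e \in F); last first.
  by rewrite (y_out eF) (chi_diff_out eF) mulr0.
have [[a ae1] [b be]] := (edge_vertex e1, edge_vertex e).
have := connect_adj_edge_const kerA_symdiff_local (single_component_connect hF e1F eF ae1 be).
by move=> /(_ e1 e e1F eF ae1 be) ->; rewrite -mulrA chi_diff_sqr ?mulr1.
Qed.

End MatchingDifference.

End CompleteGraph.

Theorem corollary2 (R : realFieldType) (n : nat) (hn2 : (2 <= n)%N) (hne : ~~ odd n)
  (M1 M2 : {set edge n}) (h1 : perfect_matching M1) (h2 : perfect_matching M2)
  (hcomp : single_nontrivial_component (symdiff M1 M2)) :
  is_circuit (fun e => chi R M1 e - chi R M2 e).
Proof.
(* [hn2] and [hne] are unused: they follow from [h1]. *)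
have [e0 e0F] := single_component_edge hcomp.
split; first by exists e0; apply: chi_diff_neq0.
split; first exact: chi_diff_kerA.
move=> y y_ker [e1 ye1] supp_y.
have y_out e : e \notin symdiff M1 M2 -> y e = 0.
  by move/(chi_diff_out R); apply: suppB_sub_vanish.
have e1F : e1 \in symdiff M1 M2 by apply: contraNT ye1 => /y_out ->.
apply: (suppB_scale (c := y e1 * chi_diff R M1 M2 e1)).
  by rewrite mulf_neq0 ?chi_diff_neq0.
exact: kerA_symdiff_proportional.
Qed.
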